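(* Let $K$ be a field of characteristic $p>0$ such that $K/k$ is a finitely generated field extension, where $k=\bigcap_{n\ge0}K^{p^n}$. Let $W_\bullet$ be a power tower on $K$, let $\mathcal{F}_i=T_{W_{i-1}/W_i}$ for $i\ge1$, and let $\mathcal{D}=\bigcup_{n\ge0}\operatorname{Diff}_{W_n}(K)$. Then for every $i\ge1$, $d(K/W_{i-1})(\mathcal{D})\cap TW_{i-1}=\mathcal{F}_i$. In particular $\mathcal{D}\cap TK=T_{K/W_1}$.
   Context: A power tower on $K$ is a sequence of subfields $W_0,W_1,\ldots$ with $W_j=W_i\cdot K^{p^j}$ whenever $j\le i$ ($\cdot$ = compositum in $K$; so $W_0=K$). For a field $F$, $TF$ is the space of derivations of $F$, $T_{F/A}$ those vanishing on a subfield $A$. For subfields $A\subseteq B$, $\operatorname{Diff}_A(B)$ is the union over $n$ of the $A$-linear maps $D:B\to B$ with $[b_0,[b_1,[\ldots,[b_n,D]\ldots]]]=0$ for all $b_i\in B$. For $k\subseteq W\subseteq K$, $d(K/W)$ sends $D\in\operatorname{Diff}_k(K)$ to its restriction $D|_W:W\to K$, an element of $\operatorname{Diff}_k(W)\otimes_W K$, identified with the $K$-span of $\iota\circ E$ ($E\in\operatorname{Diff}_k(W)$, $\iota:W\to K$ the inclusion) in $\operatorname{Hom}(W,K)$; $TW$ is viewed inside it via $E\mapsto \iota\circ E$. $d(K/K)$ is the identity. *)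

From mathcomp Require Import all_boot all_algebra.
Set Implicit Arguments. Unset Strict Implicit. Unset Printing Implicit Defensive.
Import GRing.Theory.
Local Open Scope ring_scope.

Section Defs.
Variable K : fieldType.

Definition is_subfield (A : K -> Prop) : Prop :=
  [/\ A 0, A 1,
      (forall x y, A x -> A y -> A (x - y)),
      (forall x y, A x -> A y -> A (x * y)) &
      (forall x, A x -> A x^-1)].

Definition gen_subfield (S : K -> Prop) : K -> Prop :=
  fun x => forall F, is_subfield F -> (forall y, S y -> F y) -> F x.

Definition compositum (A B : K -> Prop) : K -> Prop :=
  gen_subfield (fun y => A y \/ B y).

Definition Kpow (p n : nat) : K -> Prop :=
  fun x => exists y : K, x = y ^+ (p ^ n)%N.

Definition perfect_core (p : nat) : K -> Prop :=
  fun x => forall n, Kpow p n x.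

Definition fin_gen_over (A : K -> Prop) : Prop :=
  exists s : seq K, forall x, gen_subfield (fun y => A y \/ y \in s) x.

Definition power_tower (p : nat) (W : nat -> K -> Prop) : Prop :=
  (forall i, is_subfield (W i)) /\
  (forall i j, (j <= i)%N -> forall x, W j x <-> compositum (W i) (Kpow p j) x).

(* E is a derivation of the subfield F (a map F -> F; values of E outside F
   are irrelevant) *)
Definition is_derivation (F : K -> Prop) (E : K -> K) : Prop :=
  [/\ (forall x, F x -> F (E x)),
      (forall x y, F x -> F y -> E (x + y) = E x + E y) &
      (forall x y, F x -> F y -> E (x * y) = x * E y + E x * y)].

Definition is_rel_derivation (F A : K -> Prop) (E : K -> K) : Prop :=
  is_derivation F E /\ (forall a, A a -> E a = 0).

Definition is_linear_over (A : K -> Prop) (D : K -> K) : Prop :=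
  (forall x y, D (x + y) = D x + D y) /\
  (forall a x, A a -> D (a * x) = a * D x).

Definition comm_mul (b : K) (D : K -> K) : K -> K :=
  fun x => b * D x - D (b * x).

Fixpoint diff_order_le (n : nat) (D : K -> K) : Prop :=
  match n with
  | 0 => forall b x, comm_mul b D x = 0
  | m.+1 => forall b, diff_order_le m (comm_mul b D)
  end.

Definition is_diffop (A : K -> Prop) (D : K -> K) : Prop :=
  is_linear_over A D /\ exists n, diff_order_le n D.

Definition in_calD (W : nat -> K -> Prop) (D : K -> K) : Prop :=
  exists n, is_diffop (W n) D.

End Defs.
Arguments perfect_core : clear implicits.

(* If D is W_n-linear and agrees on W_(i-1) with a derivation E, then E kills
   W_m for m = max(n, i) (there D y = y D 1 = 0) and the p-th powers of elements
   of W_(i-1); these generate W_i = W_m K^(p^i).  Conversely, K is spanned over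
   W_(i-1) by finitely many monomials in generators of K/k, so there is a
   W_(i-1)-linear retraction pi : K -> W_(i-1), and E o pi is W_i-linear as soon
   as E vanishes on W_i.  Finally every W_j-linear map is a differential
   operator: in characteristic p, ad(y)^(p^j) = ad(y^(p^j)) kills W_j-linear
   maps, and every ad(b) is a W_j-combination of the ad(y) for y in a finite
   spanning set of K over W_j, so long iterated commutators vanish by the
   pigeonhole principle. *)

From mathcomp Require Import all_boot all_algebra ring.
From Stdlib Require Import FunctionalExtensionality Classical ClassicalEpsilon.
Import GRing.Theory.
Set Implicit Arguments. Unset Strict Implicit.
Local Open Scope ring_scope.

Section Subfields.
Variable K : fieldType.
Implicit Types (F S : K -> Prop) (E : K -> K).

Lemma mem_gen_subfield S x : S x -> gen_subfield S x.
Proof. by move=> Sx F _ /(_ x Sx). Qed.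

Lemma gen_subfield_mono S S' x :
  (forall y, S y -> S' y) -> gen_subfield S x -> gen_subfield S' x.
Proof. by move=> SS' g F hF hS; apply: g => // y /SS'; apply: hS. Qed.

Lemma gen_subfield_min F S x :
  is_subfield F -> (forall y, S y -> F y) -> gen_subfield S x -> F x.
Proof. by move=> hF hS g; apply: g. Qed.

Section Closure.
Variable F : K -> Prop.
Hypothesis hF : is_subfield F.

Lemma subfield0 : F 0. Proof. by case: hF. Qed.
Lemma subfield1 : F 1. Proof. by case: hF. Qed.
Lemma subfieldB x y : F x -> F y -> F (x - y).
Proof. by case: hF => _ _ h _ _; apply: h. Qed.

Lemma subfieldM x y : F x -> F y -> F (x * y).
Proof. by case: hF => _ _ _ h _; apply: h. Qed.

Lemma subfieldV x : F x -> F x^-1. Proof. by case: hF => _ _ _ _ h; apply: h. Qed.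

Lemma subfieldN x : F x -> F (- x).
Proof. by move=> Fx; rewrite -sub0r; apply: subfieldB => //; apply: subfield0. Qed.

Lemma subfieldD x y : F x -> F y -> F (x + y).
Proof. by move=> Fx Fy; rewrite -[y]opprK; apply: subfieldB => //; apply: subfieldN. Qed.

Lemma subfieldX x n : F x -> F (x ^+ n).
Proof.
move=> Fx; elim: n => [|n IH]; first by rewrite expr0; apply: subfield1.
by rewrite exprS; apply: subfieldM.
Qed.

End Closure.

Section Derivations.
Variables (F : K -> Prop) (E : K -> K).
Hypotheses (hF : is_subfield F) (hE : is_derivation F E).

Lemma derivation0 : E 0 = 0.
Proof.
have [_ _ hM] := hE; have := hM 0 0 (subfield0 hF) (subfield0 hF).
by rewrite mul0r mulr0 mul0r addr0.
Qed.

Lemma derivation1 : E 1 = 0.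
Proof.
have [_ _ hM] := hE; move/eqP: (hM 1 1 (subfield1 hF) (subfield1 hF)).
by rewrite !mul1r !mulr1 -subr_eq subrr eq_sym => /eqP.
Qed.

Lemma derivationB x y : F x -> F y -> E (x - y) = E x - E y.
Proof.
have [_ hD _] := hE => Fx Fy; have := hD (x - y) y (subfieldB hF Fx Fy) Fy.
by rewrite subrK => ->; rewrite addrK.
Qed.

Lemma derivationZ a x : F a -> F x -> E a = 0 -> E (a * x) = a * E x.
Proof. by have [_ _ hM] := hE => Fa Fx Ea; rewrite hM // Ea mul0r addr0. Qed.

Lemma derivationX x n : F x -> E (x ^+ n) = n%:R * x ^+ n.-1 * E x.
Proof.
move=> Fx; elim: n => [|n IH]; first by rewrite expr0 derivation1 !mul0r.
have [_ _ hM] := hE; rewrite exprS hM ?IH //; last exact: subfieldX.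
by case: n {IH} => [|n]; rewrite /= ?expr0 -?[n.+2]addn1 ?natrD ?exprS; ring.
Qed.

Lemma derivation_kernel_subfield : is_subfield (fun x => F x /\ E x = 0).
Proof.
have [_ _ hM] := hE; split.
- by split; [apply: subfield0 | apply: derivation0].
- by split; [apply: subfield1 | apply: derivation1].
- move=> x y [Fx Ex] [Fy Ey]; split; first exact: subfieldB.
  by rewrite derivationB // Ex Ey subr0.
- move=> x y [Fx Ex] [Fy Ey]; split; first exact: subfieldM.
  by rewrite hM // Ex Ey mulr0 mul0r addr0.
- move=> x [Fx Ex]; split; first exact: subfieldV.
  have [->|nz] := eqVneq x 0; first by rewrite invr0 derivation0.
  have := hM x x^-1 Fx (subfieldV hF Fx).
  rewrite mulfV // derivation1 Ex mul0r addr0 => /esym/eqP.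
  by rewrite mulf_eq0 (negbTE nz) => /eqP.
Qed.

End Derivations.

Lemma derivation_ext F F' E :
  (forall x, F x <-> F' x) -> is_derivation F E -> is_derivation F' E.
Proof.
move=> FF' [hE hD hM]; split=> [x /FF' /hE /FF' //|x y|x y] /FF' Fx /FF' Fy.
  exact: hD.
exact: hM.
Qed.

End Subfields.

Section Commutators.
Variable K : fieldType.
Implicit Types (A : K -> Prop) (f g : K -> K).
Local Notation ad := (@comm_mul K).

Lemma linear0 A f : is_linear_over A f -> f 0 = 0.
Proof.
by case=> hD _; move/eqP: (hD 0 0); rewrite addr0 -subr_eq subrr eq_sym => /eqP.
Qed.

Lemma comm_mul_linear A b f : is_linear_over A f -> is_linear_over A (ad b f).
Proof.
case=> hD hZ; split=> [x y|a x Aa]; rewrite /comm_mul.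
  by rewrite mulrDr !hD; ring.
by rewrite mulrCA !(hZ a) //; ring.
Qed.

Lemma foldr_comm_mul_linear A bs f :
  is_linear_over A f -> is_linear_over A (foldr ad f bs).
Proof. by move=> hf; elim: bs => //= b bs; apply: comm_mul_linear. Qed.

Lemma comm_mulC b c g : ad b (ad c g) = ad c (ad b g).
Proof. by apply: functional_extensionality => x; rewrite /comm_mul mulrCA; ring. Qed.

Lemma comm_mul_lin_comb A (t : seq (K * K)) g x :
  is_linear_over A g -> (forall z, z \in t -> A z.1) ->
  ad (\sum_(z <- t) z.1 * z.2) g x = \sum_(z <- t) z.1 * ad z.2 g x.
Proof.
move=> hg; have [hD hZ] := hg; elim: t => [|z t IH] At.
  by rewrite !big_nil /comm_mul !mul0r (linear0 hg) subrr.
rewrite !big_cons -IH => [|w wt]; last by apply: At; rewrite inE wt orbT.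
rewrite /comm_mul !mulrDl hD -[z.1 * z.2 * x]mulrA hZ; first ring.
by apply: At; rewrite mem_head.
Qed.

(* ad y = L - R for the commuting operators L g = y * g and R g = g (y * _). *)
Lemma iter_comm_mul_expand y m g x :
  iter m (ad y) g x = \sum_(k < m.+1) ((y%:P - 'X) ^+ m)`_k * g (y ^+ k * x).
Proof.
elim: m x => [|m IH] x.
  by rewrite big_ord_recl big_ord0 expr0 coefC /= expr0 !mul1r addr0.
rewrite iterS {1}/comm_mul !IH.
set P := (y%:P - 'X) ^+ m.
have szP : (size P <= m.+1)%N.
  apply: leq_trans (size_poly_exp_leq _ _) _.
  by rewrite -opprB size_polyN size_XsubC mul1n.
rewrite exprS mulrBl; symmetry.
under eq_bigr => k _ do rewrite coefB coefCM coefXM mulrBl.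
rewrite sumrB big_ord_recr /= (nth_default _ szP) mulr0 mul0r addr0 mulr_sumr.
congr (_ - _); first by apply: eq_bigr => k _; rewrite mulrA.
rewrite big_ord_recl /= mul0r add0r.
apply: eq_bigr => k _.
by rewrite /bump leq0n add0n add1n exprS mulrA [y * _]mulrC -mulrA.
Qed.

(* The Frobenius identity (y - X)^(p^i) = y^(p^i) - X^(p^i) in K[X]. *)
Lemma iter_comm_mul_pchar p i y g x : p \in [pchar K] ->
  iter (p ^ i) (ad y) g x = y ^+ (p ^ i) * g x - g (y ^+ (p ^ i) * x).
Proof.
move=> hp; rewrite iter_comm_mul_expand.
have hq : pnat [pchar {poly K}] (p ^ i)%N.
  rewrite (eq_pnat _ (pchar_poly K)) (eq_pnat _ (pcharf_eq hp)) pnatX.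
  by rewrite pnat_id ?(pcharf_prime hp).
have q0 : (0 < p ^ i)%N by rewrite expn_gt0 prime_gt0 ?(pcharf_prime hp).
rewrite exprDn_pchar // exprNn_pchar // -polyC_exp.
under eq_bigr => k _ do rewrite coefB coefC coefXn mulrBl.
rewrite sumrB big_ord_recl /= expr0 mul1r big1 ?addr0; last by move=> k _; rewrite mul0r.
congr (_ - _).
rewrite big_ord_recr /= big1 ?add0r ?eqxx ?mul1r // => k _.
by have := ltn_ord k; rewrite ltn_neqAle => /andP[/negPf -> _]; rewrite mul0r.
Qed.

Lemma foldr_comm_mul_rem y js f :
  y \in js -> foldr ad f js = ad y (foldr ad f (rem y js)).
Proof.
elim: js => //= z js IH; rewrite inE; have [->|ne] //= := eqVneq y z.
by move/IH ->; rewrite comm_mulC.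
Qed.

Lemma foldr_comm_mul_iter k y js f : (k <= count_mem y js)%N ->
  exists js', foldr ad f js = iter k (ad y) (foldr ad f js').
Proof.
elim: k js => [|k IH] js hk; first by exists js.
have yjs : y \in js by rewrite -has_pred1 has_count (leq_trans _ hk).
have [|js' e] := IH (rem y js).
  move/permP: (perm_to_rem yjs) => /(_ (pred1 y)) /= hc.
  by move: hk; rewrite hc eqxx add1n ltnS.
by exists js'; rewrite (foldr_comm_mul_rem f yjs) e.
Qed.

Lemma diff_order_le_foldr n f :
  (forall bs, size bs = n.+1 -> forall x, foldr ad f bs x = 0) -> diff_order_le n f.
Proof.
elim: n f => [|n IH] f h /=; first by move=> b x; apply: (h [:: b]).
move=> b; apply: IH => bs hbs x.
by have := h (bs ++ [:: b]); rewrite foldr_cat; apply; rewrite size_cat hbs addn1.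
Qed.

End Commutators.

Section LinearCombinations.
Variables (K : fieldType) (B : K -> Prop).
Hypothesis hB : is_subfield B.
Implicit Types (L : seq K) (x y b : K).

Definition lin_comb L x := exists2 t : seq (K * K),
  (forall z, z \in t -> B z.1 /\ z.2 \in L) & x = \sum_(z <- t) z.1 * z.2.

Lemma lin_comb0 L : lin_comb L 0.
Proof. by exists [::]; rewrite ?big_nil. Qed.

Lemma lin_combD L x y : lin_comb L x -> lin_comb L y -> lin_comb L (x + y).
Proof.
case=> t1 h1 ->; case=> t2 h2 ->; exists (t1 ++ t2); last by rewrite big_cat.
by move=> z; rewrite mem_cat => /orP[/h1|/h2].
Qed.

Lemma lin_comb_mulr L L' c x : (forall m, m \in L -> lin_comb L' (c * m)) ->
  lin_comb L x -> lin_comb L' (c * x).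
Proof.
move=> hm [t ht ->]; elim: t ht => [|z t IH] ht.
  by rewrite big_nil mulr0; apply: lin_comb0.
rewrite big_cons mulrDr; apply: lin_combD; last first.
  by apply: IH => w wt; apply: ht; rewrite inE wt orbT.
have [Bz /hm [t' ht' e]] := ht z (mem_head _ _).
exists [seq (z.1 * w.1, w.2) | w <- t'].
  move=> _ /mapP [w /ht' [Bw Lw] ->]; split=> //; exact: subfieldM.
by rewrite big_map mulrCA e mulr_sumr; apply: eq_bigr => w _; rewrite mulrA.
Qed.

Lemma lin_comb_mem L m : m \in L -> lin_comb L m.
Proof.
move=> Lm; exists [:: (1, m)]; last by rewrite big_seq1 mul1r.
by move=> z; rewrite inE => /eqP ->; split=> //; apply: subfield1.
Qed.

Lemma lin_combZ L b x : B b -> lin_comb L x -> lin_comb L (b * x).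
Proof.
move=> Bb; apply: lin_comb_mulr => m Lm; exists [:: (b, m)]; last by rewrite big_seq1.
by move=> z; rewrite inE => /eqP ->.
Qed.

Lemma lin_combB L x y : lin_comb L x -> lin_comb L y -> lin_comb L (x - y).
Proof.
move=> hx hy; apply: lin_combD => //; rewrite -mulN1r.
by apply: lin_combZ => //; apply: subfieldN => //; apply: subfield1.
Qed.

Lemma lin_comb_sub L L' x : {subset L <= L'} -> lin_comb L x -> lin_comb L' x.
Proof. by move=> sLL' [t ht ->]; exists t => // z /ht [Bz /sLL']. Qed.

Lemma lin_comb_cons g L x : lin_comb (g :: L) x ->
  exists v b, [/\ lin_comb L v, B b & x = v + b * g].
Proof.
case=> t ht ->; elim: t ht => [|[c m] t IH] ht.
  exists 0, 0; rewrite big_nil mul0r addr0.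
  by split; [apply: lin_comb0 | apply: subfield0 |].
have [|v [b [Lv Bb e]]] := IH; first by move=> w wt; apply: ht; rewrite inE wt orbT.
have [/= Bc] := ht _ (mem_head _ _); rewrite inE big_cons e /= => /orP[/eqP ->|Lm].
  exists v, (c + b); split=> //; first exact: subfieldD.
  by rewrite mulrDl addrCA addrA.
exists (c * m + v), b; split=> //; last by rewrite addrA.
by apply: lin_combD => //; apply: lin_combZ => //; apply: lin_comb_mem.
Qed.

Lemma lin_comb1 x : lin_comb [:: 1] x -> B x.
Proof.
case=> t ht ->; elim: t ht => [|[c m] t IH] ht; first by rewrite big_nil; apply: subfield0.
rewrite big_cons; apply: (subfieldD hB).
  by have [/= Bc] := ht _ (mem_head _ _); rewrite inE => /eqP ->; rewrite mulr1.
by apply: IH => w wt; apply: ht; rewrite inE wt orbT.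
Qed.

End LinearCombinations.

Section Retraction.
Variables (K : fieldType) (B : K -> Prop).
Hypothesis hB : is_subfield B.
Implicit Types (L M : seq K) (S : K -> Prop) (pi : K -> K).
Local Notation lin_comb := (lin_comb B).

Definition retraction_on S pi :=
  [/\ (forall x y, S x -> S y -> pi (x + y) = pi x + pi y),
      (forall b x, B b -> S x -> pi (b * x) = b * pi x),
      (forall x, S x -> B (pi x)) &
      (forall b, B b -> pi b = b)].

Lemma lin_comb_cons_redundant g M x :
  lin_comb M g -> lin_comb (g :: M) x -> lin_comb M x.
Proof.
move=> Mg /(lin_comb_cons hB) [v [b [Mv Bb ->]]].
by apply: lin_combD => //; apply: lin_combZ.
Qed.

Lemma lin_comb_cons_unique g M v v' b b' : ~ lin_comb M g ->
  lin_comb M v -> lin_comb M v' -> B b -> B b' ->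
  v + b * g = v' + b' * g -> v = v'.
Proof.
move=> nMg Mv Mv' Bb Bb' e.
have [ebb|nbb] := eqVneq b b'; first by move: e; rewrite ebb => /addIr.
have nz : b' - b != 0 by rewrite subr_eq0 eq_sym.
have eg : g = (b' - b)^-1 * (v - v').
  apply: (mulfI nz); rewrite mulrA mulfV // mul1r.
  have -> : v - v' = v + b * g - v' - b * g by ring.
  by rewrite e; ring.
case: nMg; rewrite eg; apply: lin_combZ => //; last exact: lin_combB.
by apply: subfieldV => //; apply: subfieldB.
Qed.

(* When g is not in the span of M, x = v + b * g determines v; send x to pi v. *)
Lemma retraction_cons g M pi : 1 \in M ->
  retraction_on (lin_comb M) pi -> exists pi', retraction_on (lin_comb (g :: M)) pi'.
Proof.
move=> M1 [hD hZ hval hid].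
have MB b : B b -> lin_comb M b.
  by move=> Bb; rewrite -[b]mulr1; apply: lin_combZ => //; apply: lin_comb_mem.
have [Mg|nMg] := classic (lin_comb M g).
  have red := lin_comb_cons_redundant Mg.
  by exists pi; split=> [x y /red Mx /red My|b x Bb /red Mx|x /red|]; auto.
pose P x v := lin_comb M v /\ exists2 b, B b & x = v + b * g.
pose vx x := epsilon (inhabits 0) (P x).
have vxE x v b : lin_comb M v -> B b -> x = v + b * g -> vx x = v.
  move=> Mv Bb ex; have [Mvx [b' Bb' ex']] : P x (vx x).
    by apply: epsilon_spec; exists v; split=> //; exists b.
  by apply: (lin_comb_cons_unique nMg Mvx Mv Bb' Bb); rewrite -ex' -ex.
exists (pi \o vx); split=> /=.
- move=> x y /(lin_comb_cons hB) [v [b [Mv Bb ->]]].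
  move=> /(lin_comb_cons hB) [w [c [Mw Bc ->]]].
  rewrite (vxE _ _ _ Mv Bb erefl) (vxE _ _ _ Mw Bc erefl) -hD //.
  by rewrite (vxE _ (v + w) (b + c)) //; [exact: lin_combD | exact: subfieldD | ring].
- move=> a x Ba /(lin_comb_cons hB) [v [b [Mv Bb ->]]].
  rewrite (vxE _ _ _ Mv Bb erefl) -hZ //.
  by rewrite (vxE _ (a * v) (a * b)) //; [exact: lin_combZ | exact: subfieldM | ring].
- move=> x /(lin_comb_cons hB) [v [b [Mv Bb ->]]].
  by rewrite (vxE _ _ _ Mv Bb erefl); apply: hval.
- move=> b Bb; rewrite (vxE b b 0) ?hid //.
  + exact: MB.
  + exact: subfield0.
  + by rewrite mul0r addr0.
Qed.

Lemma linear_retraction L : (forall x, lin_comb L x) ->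
  exists pi, [/\ is_linear_over B pi, forall x, B (pi x) & forall b, B b -> pi b = b].
Proof.
move=> hL.
have [pi [hD hZ hval hid]] : exists pi, retraction_on (lin_comb (L ++ [:: 1])) pi.
  elim: L {hL} => [|g L [pi hpi]]; last first.
    by apply: (retraction_cons g _ hpi); rewrite mem_cat mem_head orbT.
  by exists id; split=> // x; apply: lin_comb1.
have hL1 x : lin_comb (L ++ [:: 1]) x.
  by apply: lin_comb_sub (hL x) => z zL; rewrite mem_cat zL.
by exists pi; split=> [|x|//]; [split=> *; [apply: hD | apply: hZ] | apply: hval].
Qed.

Lemma derivation_extension A E L : (forall x, lin_comb L x) ->
  (forall a, A a -> B a) -> is_derivation B E -> (forall a, A a -> E a = 0) ->
  exists D, is_linear_over A D /\ forall x, B x -> D x = E x.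
Proof.
move=> hL AB hE EA; have [pi [[piD piZ] piB pid]] := linear_retraction hL.
exists (E \o pi); split=> [|x Bx]; last by rewrite /= pid.
have [_ ED _] := hE; split=> [x y|a x Aa] /=; first by rewrite piD ED.
by have Ba := AB a Aa; rewrite piZ // (derivationZ hE) // EA.
Qed.

End Retraction.

Section Monomials.
Variables (K : fieldType) (B : K -> Prop) (Q : nat).
Hypotheses (hB : is_subfield B) (Q0 : (0 < Q)%N) (hQ : forall x, B (x ^+ Q)).
Local Notation lin_comb := (lin_comb B).

(* Closure under inverses comes for free: z^-1 = z^(Q-1) * (z^Q)^-1 with z^Q in B. *)
Lemma subring_generated_full (s : seq K) (S : K -> Prop) :
  (forall x, gen_subfield (fun y => B y \/ y \in s) x) ->
  (forall b, B b -> S b) -> (forall y, y \in s -> S y) ->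
  (forall x y, S x -> S y -> S (x - y)) -> (forall x y, S x -> S y -> S (x * y)) ->
  forall x, S x.
Proof.
move=> hgen BS sS SB SM x; apply: gen_subfield_min (hgen x); last by move=> y [/BS|/sS].
have S1 : S 1 by apply/BS/(subfield1 hB).
have S0 : S 0 by apply/BS/(subfield0 hB).
split=> // z Sz; have [->|nz] := eqVneq z 0; first by rewrite invr0.
have SX n : S (z ^+ n) by elim: n => [|n IH]; rewrite ?expr0 // exprS; apply: SM.
have -> : z^-1 = z ^+ Q.-1 * (z ^+ Q)^-1.
  by rewrite -{2}(prednK Q0) exprS invfM mulrCA mulfV ?mulr1 // expf_neq0.
by apply: SM => //; apply/BS/(subfieldV hB).
Qed.

Fixpoint monomials (gs : seq K) : seq K :=
  if gs is g :: gs' then [seq g ^+ e * m | e <- iota 0 Q, m <- monomials gs']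
  else [:: 1].

Lemma monomial_mem g gs e m :
  (e < Q)%N -> m \in monomials gs -> g ^+ e * m \in monomials (g :: gs).
Proof.
by move=> eQ mgs; apply: (allpairs_f (fun e m => g ^+ e * m)); rewrite ?mem_iota.
Qed.

Lemma monomials1 gs : 1 \in monomials gs.
Proof.
elim: gs => [|g gs IH]; first exact: mem_head.
by rewrite -[1]mul1r -(expr0 g); apply: monomial_mem.
Qed.

Lemma lin_comb_mul_monomial gs y m :
  y \in gs -> m \in monomials gs -> lin_comb (monomials gs) (y * m).
Proof.
elim: gs y m => // g gs IH y m ygs /allpairsP [[e m'] [/= ei m'gs ->]].
move: ei; rewrite mem_iota add0n /= => eQ.
have [->|ne] := eqVneq y g.
  rewrite mulrA -exprS; have [e1Q|] := ltnP e.+1 Q.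
    by apply: (lin_comb_mem hB); apply: monomial_mem.
  rewrite leq_eqVlt ltnNge eQ orbF => /eqP <-.
  have -> : g ^+ Q * m' = g ^+ Q * (g ^+ 0 * m') by rewrite expr0 mul1r.
  by apply: (lin_combZ hB) => //; apply: (lin_comb_mem hB); apply: monomial_mem.
move: ygs; rewrite inE (negbTE ne) /= => ygs.
rewrite mulrCA; apply: (lin_comb_mulr hB) (IH _ _ ygs m'gs) => // n ngs.
by apply: (lin_comb_mem hB); apply: monomial_mem.
Qed.

Lemma lin_comb_monomials gs :
  (forall x, gen_subfield (fun y => B y \/ y \in gs) x) ->
  forall x, lin_comb (monomials gs) x.
Proof.
move=> hgen x; rewrite -[x]mulr1.
pose S y := forall x, lin_comb (monomials gs) x -> lin_comb (monomials gs) (y * x).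
suff: S x by apply; apply: (lin_comb_mem hB); apply: monomials1.
apply: (subring_generated_full hgen (S := S)) => {x}
  [b Bb x|y ygs x|y z Sy Sz x|y z Sy Sz x] Mx.
- exact: (lin_combZ hB).
- by apply: (lin_comb_mulr hB) Mx => // m mgs; apply: lin_comb_mul_monomial.
- by rewrite mulrBl; apply: (lin_combB hB); [apply: Sy | apply: Sz].
- by rewrite -mulrA; apply: Sy; apply: Sz.
Qed.

End Monomials.

Lemma pigeonhole_count (T : eqType) (js L : seq T) m :
  {subset js <= L} -> (size L * m < size js)%N -> exists y, (m < count_mem y js)%N.
Proof.
move=> sjL; pose many y := (m < count_mem y js)%N.
have [/hasP [y _ hy]|/hasPn few] := boolP (has many (undup js)); first by exists y.
rewrite ltnNge => /negP []; apply: leq_trans (_ : size (undup js) * m <= _)%N; last first.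
  by rewrite leq_mul2r uniq_leq_size ?undup_uniq ?orbT // => y; rewrite mem_undup => /sjL.
have -> : size js = (\sum_(y <- undup js) count_mem y js)%N.
  rewrite -sum1_size -big_undup_iterop_count; apply: eq_bigr => y _.
  by rewrite Monoid.iteropE iter_addn_0 mul1n.
rewrite mulnC -iter_addn_0 -count_predT -big_const_seq big_seq [X in (_ <= X)%N]big_seq.
by apply: leq_sum => y /few; rewrite -leqNgt.
Qed.

Section LinearMapsAreDifferentialOperators.
Variables (K : fieldType) (A : K -> Prop) (q : nat) (L : seq K).
Hypotheses (hspan : forall x, lin_comb A L x)
  (hnil : forall y g, is_linear_over A g -> forall x, iter q (comm_mul y) g x = 0).
Local Notation ad := (@comm_mul K).

(* Each commutator [b, -] is an A-combination of the [y, -] with y in L. *)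
Lemma foldr_comm_mul_expand f bs : is_linear_over A f ->
  exists2 t : seq (K * seq K),
    (forall z, z \in t -> size z.2 = size bs /\ {subset z.2 <= L}) &
    forall x, foldr ad f bs x = \sum_(z <- t) z.1 * foldr ad f z.2 x.
Proof.
move=> hf; elim: bs => [|b bs [t ht e]].
  exists [:: (1, [::])] => [z|x]; last by rewrite big_seq1 mul1r.
  by rewrite inE => /eqP ->.
have [tb htb eb] := hspan b.
exists [seq (w.1 * z.1, w.2 :: z.2) | z <- t, w <- tb].
  move=> _ /allpairsP [[z w] [/= zt wtb ->]] /=; have [-> sub] := ht z zt.
  split=> // y; rewrite inE => /orP [/eqP ->|/sub //]; exact: (htb w wtb).2.
move=> x; rewrite big_allpairs_dep /=.
transitivity (\sum_(z <- t) z.1 * ad b (foldr ad f z.2) x).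
  by rewrite /comm_mul !e mulr_sumr -sumrB; apply: eq_bigr => z _; ring.
apply: eq_bigr => z _; rewrite eb (comm_mul_lin_comb _ (foldr_comm_mul_linear _ hf)).
  by rewrite mulr_sumr; apply: eq_bigr => w _ /=; ring.
by move=> w /htb [].
Qed.

Lemma foldr_comm_mul_vanish f js : is_linear_over A f -> {subset js <= L} ->
  (size L * q.-1 < size js)%N -> forall x, foldr ad f js x = 0.
Proof.
move=> hf sjL /(pigeonhole_count sjL) [y hy] x.
have [|js' ->] := @foldr_comm_mul_iter _ q y js f; first by case: (q) hy.
exact/hnil/foldr_comm_mul_linear.
Qed.

Lemma linear_diff_order f : is_linear_over A f -> diff_order_le (size L * q.-1) f.
Proof.
move=> hf; apply: diff_order_le_foldr => bs hbs x.
have [t ht ->] := foldr_comm_mul_expand bs hf.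
rewrite big1_seq // => z /andP [_ /ht [sz sjL]].
by rewrite foldr_comm_mul_vanish ?mulr0 // sz hbs.
Qed.

End LinearMapsAreDifferentialOperators.

Section PowerTower.
Variables (K : fieldType) (p : nat) (W : nat -> K -> Prop).
Hypotheses (hW : power_tower p W) (hp : p \in [pchar K])
  (hfg : fin_gen_over (perfect_core K p)).

Lemma tower_subfield i : is_subfield (W i). Proof. by case: hW. Qed.

Lemma tower_compositum j i x :
  (j <= i)%N -> W j x -> compositum (W i) (Kpow p j) x.
Proof. by move=> ji; case: hW => _ h; exact: (proj1 (h i j ji x)). Qed.

Lemma tower_antitone j i x : (j <= i)%N -> W i x -> W j x.
Proof.
move=> ji Wx; case: hW => _ h.
by apply: (proj2 (h i j ji x)); apply: mem_gen_subfield; left.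
Qed.

Lemma tower_Kpow j x : Kpow p j x -> W j x.
Proof.
move=> Kx; case: hW => _ h.
by apply: (proj2 (h j j (leqnn j) x)); apply: mem_gen_subfield; right.
Qed.

Lemma tower0 x : W 0 x.
Proof. by apply: tower_Kpow; exists x; rewrite expn0 expr1. Qed.

Lemma tower_derivation_vanishes i E D n :
  (1 <= i)%N -> is_derivation (W i.-1) E -> is_linear_over (W n) D ->
  (forall x, W i.-1 x -> D x = E x) -> forall a, W i a -> E a = 0.
Proof.
move=> i1 hE [_ hD] DE a /(tower_compositum (leq_maxr n i)) gen_a.
have hB := tower_subfield i.-1.
suff [] : W i.-1 a /\ E a = 0 by [].
apply: (gen_subfield_min (derivation_kernel_subfield hB hE)) gen_a => y [Wy|[z ->]].
  have [Wy' Wny] : W i.-1 y /\ W n y.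
    split; apply: tower_antitone Wy; last exact: leq_maxl.
    by rewrite (leq_trans (leq_pred i)) ?leq_maxr.
  split=> //; rewrite -DE // -[y]mulr1 hD // DE ?(derivation1 hB hE) ?mulr0 //.
  exact: subfield1.
have Wz : W i.-1 (z ^+ (p ^ i.-1)) by apply: tower_Kpow; exists z.
rewrite -(prednK i1) expnSr exprM prednK //; split; first exact: subfieldX.
by rewrite (derivationX hB hE _ Wz) (pcharf0 hp) !mul0r.
Qed.

Lemma tower_lin_comb_monomials j : exists L, forall x, lin_comb (W j) L x.
Proof.
have [s hs] := hfg.
have pj0 : (0 < p ^ j)%N by rewrite expn_gt0 prime_gt0 ?(pcharf_prime hp).
exists (monomials (p ^ j) s); apply: (lin_comb_monomials (tower_subfield j) pj0) => x.
  by apply: tower_Kpow; exists x.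
apply: gen_subfield_mono (hs x) => y [ky|]; last by right.
by left; apply: tower_Kpow; apply: ky.
Qed.

Lemma tower_linear_diffop j f : is_linear_over (W j) f -> is_diffop (W j) f.
Proof.
move=> hf; split=> //; have [L hL] := tower_lin_comb_monomials j.
exists (size L * (p ^ j).-1)%N; apply: linear_diff_order hL _ f hf => y g [_ hg] x.
by rewrite iter_comm_mul_pchar // hg ?subrr //; apply: tower_Kpow; exists y.
Qed.

Lemma tower_extension_iff i E : (1 <= i)%N -> is_derivation (W i.-1) E ->
  (exists D, in_calD W D /\ forall x, W i.-1 x -> D x = E x)
  <-> is_rel_derivation (W i.-1) (W i) E.
Proof.
move=> i1 hE; split=> [[D [[n [hD _]] DE]]|[_ EW]].
  by split=> //; apply: tower_derivation_vanishes hD DE.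
have [L hL] := tower_lin_comb_monomials i.-1.
have Wi x : W i x -> W i.-1 x by apply: tower_antitone; apply: leq_pred.
have [D [hD DE]] := derivation_extension (tower_subfield i.-1) hL Wi hE EW.
by exists D; split=> //; exists i; apply: tower_linear_diffop.
Qed.

Lemma tower_diffop_derivation_iff E : is_derivation (fun _ => True) E ->
  in_calD W E <-> is_rel_derivation (fun _ => True) (W 1) E.
Proof.
move=> hE; have hE0 : is_derivation (W 0) E.
  by apply: derivation_ext hE => x; split=> // _; apply: tower0.
have [ext_vanish vanish_ext] := tower_extension_iff (isT : (1 <= 1)%N) hE0.
split=> [DE|[_ EW]].
  by have [_ EW] := ext_vanish (ex_intro _ E (conj DE (fun _ _ => erefl))).
have [D [hD DE]] := vanish_ext (conj hE0 EW).
have -> // : E = D by apply: functional_extensionality => x; rewrite DE //; apply: tower0.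
Qed.

End PowerTower.

Theorem mainTheorem6 (K : fieldType) (p : nat) (W : nat -> K -> Prop) :
  prime p -> p \in [pchar K] ->
  fin_gen_over (perfect_core K p) ->
  power_tower p W ->
  (forall i : nat, (1 <= i)%N ->
     forall E : K -> K, is_derivation (W i.-1) E ->
       ((exists D : K -> K, in_calD W D /\ (forall x, W i.-1 x -> D x = E x))
        <-> is_rel_derivation (W i.-1) (W i) E)) /\
  (forall E : K -> K, is_derivation (fun _ => True) E ->
     (in_calD W E <-> is_rel_derivation (fun _ => True) (W 1%N) E)).
Proof.
move=> _ hp hfg hW; split.
  by move=> i i1 E; apply: (tower_extension_iff hW hp hfg i1).
exact: (tower_diffop_derivation_iff hW hp hfg).
Qed.
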